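(* Let $G$ be a finite abelian group and let $x, y \in G$. Then there exists an automorphism $\phi \in \operatorname{Aut}(G)$ with $\phi(x) = y$ if and only if $G/\langle x \rangle \cong G/\langle y \rangle$.
   Context: $G$ is written additively; $\langle x\rangle$ denotes the cyclic subgroup generated by $x$, and $\operatorname{Aut}(G)$ is the group of group automorphisms of $G$. *)

From mathcomp Require Import all_boot all_fingroup all_solvable.
Set Implicit Arguments.
Unset Strict Implicit.
Unset Printing Implicit Defensive.

From mathcomp Require Import all_boot all_fingroup all_solvable.
From mathcomp Require Import zify.

(* An automorphism a maps <[x]> onto <[a x]> and so induces G / <[x]> \isog G / <[a x]>.
   Conversely, let S be the subgroup of m-th powers of G.  Since S / <[z]> is the group of
   m-th powers of G / <[z]>, an isomorphism G / <[x]> \isog G / <[y]> forces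
   #|S :&: <[x]>| = #|S :&: <[y]>|, and as also #[x] = #[y], the powers x ^+ k and y ^+ k
   are m-th powers for the same k and m.  Restricted to a Sylow subgroup these data are the
   heights of the p-power multiples of x, and such heights determine an element up to
   automorphism of an abelian p-group: either x = z ^+ p for a z of maximal height, whose
   heights are read off those of x, or x = x1 * c where <[x1]> is a cyclic direct factor and
   the heights of c in the complement are read off those of x.  The complements for x and y
   are isomorphic by cancellation of a cyclic factor in the abelian type, so induction
   applies. *)

Set Implicit Arguments.
Unset Strict Implicit.
Unset Printing Implicit Defensive.
Local Open Scope group_scope.

Definition powers (gT : finGroupType) m (A : {set gT}) := [set a ^+ m | a in A].

Section Powers.

Variable gT : finGroupType.
Implicit Types (A B G H : {group gT}).

Lemma mem_powers m A a : a \in A -> a ^+ m \in powers m A.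
Proof. exact: imset_f. Qed.

Lemma powers1 m A : 1 \in powers m A.
Proof. by apply/imsetP; exists 1; rewrite ?expg1n. Qed.

Lemma powers_sub m A : powers m A \subset A.
Proof. by apply/subsetP=> _ /imsetP[a Aa ->]; rewrite groupX. Qed.

Lemma powers_group_set m G : abelian G -> group_set (powers m G).
Proof.
move=> cGG; apply/group_setP; split; first exact: powers1.
move=> _ _ /imsetP[a Ga ->] /imsetP[b Gb ->].
by rewrite -expgMn ?mem_powers ?groupM //; apply: (centsP cGG).
Qed.

Lemma powers_quotient m G H :
  G \subset 'N(H) -> powers m (G / H) = powers m G / H.
Proof.
move=> nHG; have nHGm := subset_trans (powers_sub m G) nHG.
rewrite /quotient !morphimEsub // /powers -!imset_comp.
by apply: eq_in_imset => a Ga /=; rewrite morphX // (subsetP nHG).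
Qed.

Lemma powers_dprod m A B G a b :
  A \x B = G -> abelian G -> a \in A -> b \in B ->
  (a * b \in powers m G) = (a \in powers m A) && (b \in powers m B).
Proof.
move=> dG cGG Aa Bb; have [_ defG _ _] := dprodP dG.
have sAG : A \subset G by rewrite -defG mulG_subl.
have sBG : B \subset G by rewrite -defG mulG_subr.
have cAB a1 b1 : a1 \in A -> b1 \in B -> commute a1 b1.
  by move=> Aa1 Bb1; apply: (centsP cGG); [apply: (subsetP sAG) | apply: (subsetP sBG)].
apply/idP/andP=> [/imsetP[g Gg eab] | [/imsetP[a1 Aa1 ->] /imsetP[b1 Bb1 ->]]].
  have Gab : a * b \in G by rewrite eab groupX.
  have [a' [b' [_ _ _ uniq_ab]]] := mem_dprod dG Gab.
  have [g1 [g2 [Ag1 Bg2 defg _]]] := mem_dprod dG Gg.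
  rewrite defg expgMn in eab; last exact: cAB.
  have [-> ->] := uniq_ab a b Aa Bb (erefl _).
  have [<- <-] := uniq_ab _ _ (groupX m Ag1) (groupX m Bg2) eab.
  by rewrite !mem_powers.
by rewrite -expgMn ?mem_powers -?defG ?mem_mulg //; apply: cAB.
Qed.

Lemma powers_dprod_coprime A B G a b k m :
    A \x B = G -> abelian G -> coprime #|A| #|B| -> a \in A -> b \in B ->
  ((a * b) ^+ (k * #|B|) \in powers m G) = (a ^+ k \in powers m A).
Proof.
move=> dG cGG coAB Aa Bb; have [_ defG _ _] := dprodP dG.
have sAG : A \subset G by rewrite -defG mulG_subl.
have sBG : B \subset G by rewrite -defG mulG_subr.
have cAA := abelianS sAG cGG.
rewrite expgMn; last by apply: (centsP cGG); [apply: (subsetP sAG) | apply: (subsetP sBG)].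
rewrite !expgM (expg_cardG (groupX k Bb)) mulg1.
have := powers_dprod m dG cGG (groupX #|B| (groupX k Aa)) (group1 B).
rewrite mulg1 powers1 andbT => ->.
pose S := Group (powers_group_set m cAA); rewrite -[powers m A]/(gval S).
apply/idP/idP=> [S_akB | ]; last exact: groupX.
by rewrite -(expgK coAB (groupX k Aa)) groupX.
Qed.

Lemma card_powers_isog (rT : finGroupType) m G (R : {group rT}) :
  G \isog R -> #|powers m G| = #|powers m R|.
Proof.
case/isogP=> f injf <-; rewrite -(card_injm injf (powers_sub m G)).
rewrite !morphimEsub ?powers_sub // /powers -!imset_comp.
by congr #|pred_of_set _|; apply: eq_in_imset => a Ga /=; rewrite morphX.
Qed.

End Powers.

Section QuotientCycle.

Variable gT : finGroupType.
Implicit Types (G H S : {group gT}) (x y z : gT).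

Lemma expg_mem_cycle_dvd z S k :
  (z ^+ k \in S) = (#[z] %/ gcdn #[z] k %| #|S :&: <[z]>|).
Proof.
rewrite -orderXgcd orderE (cardSg_cyclic (cycle_cyclic z)) ?subsetIr //.
  by rewrite cycle_subG inE mem_cycle andbT.
by rewrite cycle_subG mem_cycle.
Qed.

Lemma card_quotient_mulI G H : G \subset 'N(H) -> (#|G / H| * #|G :&: H|)%N = #|G|.
Proof. by move=> nHG; rewrite card_quotient // -indexgI mulnC Lagrange ?subsetIl. Qed.

Lemma order_isog_quotient_cycle G x y :
  abelian G -> x \in G -> y \in G -> G / <[x]> \isog G / <[y]> -> #[x] = #[y].
Proof.
move=> cGG Gx Gy /card_isog; rewrite !card_quotient ?sub_abelian_norm ?cycle_subG //.
move=> eq_index; apply/eqP; rewrite -(eqn_pmul2r (indexg_gt0 G <[y]>)) -{1}eq_index.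
by rewrite !orderE !Lagrange ?cycle_subG.
Qed.

Lemma isog_quotient_cycle_powers G x y :
  abelian G -> x \in G -> y \in G -> G / <[x]> \isog G / <[y]> ->
  forall k m, (x ^+ k \in powers m G) = (y ^+ k \in powers m G).
Proof.
move=> cGG Gx Gy isoxy k m; pose S := Group (powers_group_set m cGG).
have cardS z : z \in G -> (#|powers m (G / <[z]>)| * #|S :&: <[z]>|)%N = #|S|.
  move=> Gz; have nzG : G \subset 'N(<[z]>) by rewrite sub_abelian_norm ?cycle_subG.
  rewrite powers_quotient // -[powers m G]/(gval S) card_quotient_mulI //.
  exact: subset_trans (powers_sub m G) nzG.
have eqSxy : #|S :&: <[x]>| = #|S :&: <[y]>|.
  apply/eqP; rewrite -(eqn_pmul2l (_ : 0 < #|powers m (G / <[y]>)|)).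
    by rewrite -{1}(card_powers_isog m isoxy) !cardS.
  by apply/card_gt0P; exists 1; apply: powers1.
rewrite -[powers m G]/(gval S) !expg_mem_cycle_dvd eqSxy.
by rewrite (order_isog_quotient_cycle cGG Gx Gy isoxy).
Qed.

Lemma isog_quotient_cycle_Aut G x a :
  abelian G -> x \in G -> a \in Aut G -> G / <[x]> \isog G / <[a x]>.
Proof.
move=> cGG Gx AutGa; have nsxG : <[x]> <| G by rewrite -sub_abelian_normal ?cycle_subG.
have := sub_isog (subxx (G / <[x]>)) (injm_quotm nsxG (injm_autm AutGa)).
by rewrite morphim_quotm im_autm morphim_cycle //= autmE.
Qed.

End QuotientCycle.

Lemma order_pfactor_exact (gT : finGroupType) p (u : gT) j :
  prime p -> u ^+ (p ^ j.+1) = 1 -> u ^+ (p ^ j) != 1 -> #[u] = (p ^ j.+1)%N.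
Proof.
move=> p_pr uj1 nt_uj; have /(dvdn_pfactor _ _ p_pr)[m le_mj1 ou] : #[u] %| p ^ j.+1.
  by rewrite order_dvdn uj1.
rewrite ou; congr (p ^ _)%N; apply/eqP; rewrite eqn_leq le_mj1 ltnNge.
by apply: contra nt_uj => le_mj; rewrite -order_dvdn ou dvdn_exp2l.
Qed.

Lemma splits_quotient_TI (gT : finGroupType) (G K N : {group gT}) :
  N <| G -> K \subset G -> K :&: N = 1 -> [splits G / N, over K / N] ->
  [splits G, over K].
Proof.
move=> nsNG sKG tiKN /splitsP[Cb /complP[tiCb defGb]].
have [sNG nNG] := andP nsNG; have nNK := subset_trans sKG nNG.
have sCbG : Cb \subset G / N by rewrite -defGb mulG_subr.
pose C := (coset N @*^-1 Cb)%G.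
have sCG : C \subset G by rewrite -(quotientGK nsNG) morphpreS.
have tiKC : K :&: C = 1.
  apply/trivgP/subsetP=> v /setIP[Kv /morphpreP[Nv Cbv]].
  have : coset N v \in K / N :&: Cb by rewrite inE Cbv mem_quotient.
  by rewrite tiCb => /set1P/(coset_idr Nv) Nv1; rewrite -tiKN inE Kv Nv1.
have oKb : #|K / N| = #|K| by rewrite (card_isog (quotient_isog nNK _)) // setIC.
apply/splitsP; exists C; apply/complP; split=> //.
apply/eqP; rewrite eqEcard mul_subG //= TI_cardMg //.
rewrite card_morphpre ?ker_coset; last exact: subset_trans sCbG (quotientS _ _).
by rewrite -(Lagrange sNG) -card_quotient // -defGb TI_cardMg // oKb mulnCA mulnA.
Qed.

Lemma cycle_mul_Mho1 (gT : finGroupType) p (u a : gT) :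
  prime p -> p.-elt u -> a \in 'Mho^1(<[u]>) -> <[u * a]> = <[u]>.
Proof.
move=> p_pr pu; rewrite (Mho_p_cycle 1 pu) expn1 => /cycleP[s ->].
rewrite -expgM -expgS; apply/esym/eqP; rewrite [_ == _]generator_coprime.
rewrite (pnat_coprime pu) // p'natE // -addn1 dvdn_addr ?dvdn_mulr //.
by rewrite dvdn1 neq_ltn prime_gt1 ?orbT.
Qed.

Lemma dprod_isom (gT : finGroupType) (A B G A' B' G' : {group gT})
    (fA : {morphism A >-> gT}) (fB : {morphism B >-> gT}) :
    A \x B = G -> A' \x B' = G' -> isom A A' fA -> isom B B' fB ->
  exists2 f : {morphism G >-> gT}, isom G G' f &
    {in A & B, forall a b, f (a * b) = fA a * fB b}.
Proof.
move=> dG dG' /isomP[injA imA] /isomP[injB imB].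
have [_ defG' cB'A' tiA'B'] := dprodP dG'.
have cf : fB @* B \subset 'C(fA @* A) by rewrite imA imB.
exists (dprodm_morphism dG cf); last exact: dprodmE.
apply/isomP; rewrite injm_dprodm injA injB imA imB tiA'B' eqxx.
by rewrite im_dprodm imA imB.
Qed.

Lemma cycle_isom_order (gT : finGroupType) (x y : gT) : #[x] = #[y] ->
  exists2 f : {morphism <[x]> >-> gT}, isom <[x]> <[y]> f & f x = y.
Proof.
move=> oxy; have dvd_yx : #[y] %| #[x] by rewrite oxy.
exists (eltm dvd_yx); last exact: eltm_id.
by apply/isomP; rewrite injm_eltm oxy im_eltm.
Qed.

Lemma order_expg_prime_lt (gT : finGroupType) p (z : gT) :
  prime p -> p.-elt z -> z != 1 -> #[z ^+ p] < #[z].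
Proof.
rewrite -cycle_eq1 => p_pr pz /(pgroup_pdiv pz)[_ p_z _].
by rewrite orderXdiv -?orderE // ltn_Pdiv ?prime_gt1 ?order_gt0.
Qed.

Lemma cycle_dprod_isom (gT : finGroupType) (x y c : gT) (C C' G G' : {group gT})
    (g : {morphism C >-> gT}) :
    <[x]> \x C = G -> <[y]> \x C' = G' -> #[x] = #[y] -> isom C C' g -> c \in C ->
  exists2 f : {morphism G >-> gT}, isom G G' f & f (x * c) = y * g c.
Proof.
move=> dG dG' oxy isog Cc; have [f1 isof1 f1x] := cycle_isom_order oxy.
have [f isof fM] := dprod_isom dG dG' isof1 isog.
by exists f; rewrite // fM ?cycle_id // f1x.
Qed.

Section AbelianPGroup.

Variables (gT : finGroupType) (p : nat) (G : {group gT}).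
Hypotheses (p_pr : prime p) (pG : p.-group G) (cGG : abelian G).
Implicit Types (A B C : {group gT}) (a b g : gT).

Lemma Mho_abelian_root i a : a \in 'Mho^i(G) -> exists2 g, g \in G & a = g ^+ (p ^ i).
Proof. by rewrite (MhoEabelian i pG cGG) => /imsetP[g Gg ->]; exists g. Qed.

Lemma mem_Mho_expg i g : g \in G -> g ^+ (p ^ i) \in 'Mho^i(G).
Proof. by move=> Gg; rewrite Mho_p_elt // (mem_p_elt pG Gg). Qed.

Lemma Mho_expgn i l a : a \in 'Mho^i(G) -> a ^+ (p ^ l) \in 'Mho^(i + l)(G).
Proof. by case/Mho_abelian_root=> g Gg ->; rewrite -expgM -expnD mem_Mho_expg. Qed.

Lemma Mho_logn_eq1 i a : logn p #|G| <= i -> a \in 'Mho^i(G) -> a = 1.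
Proof.
move=> le_Gi /(subsetP (Mho_leq G le_Gi))/Mho_abelian_root[g Gg ->].
by rewrite -(card_pgroup pG) expg_cardG.
Qed.

Lemma Mho_root_max k a : a \in 'Mho^k(G) ->
  exists b, [/\ b \in G, b ^+ (p ^ k) = a &
                forall t, a \in 'Mho^(k + t)(G) -> b \in 'Mho^t(G)].
Proof.
move=> Mk_a; have [-> | nt_a] := eqVneq a 1.
  by exists 1; split=> [||t _]; rewrite ?group1 ?expg1n.
have max_a i : a \in 'Mho^i(G) -> i <= logn p #|G|.
  by move=> Mi_a; rewrite leqNgt; apply: contra nt_a => /ltnW/Mho_logn_eq1/(_ Mi_a)->.
have [h Mh_a max_h] := ex_maxnP (ex_intro _ k Mk_a) max_a.
have [v Gv def_a] := Mho_abelian_root Mh_a; have le_kh := max_h k Mk_a.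
exists (v ^+ (p ^ (h - k))); split=> [||t Mkt_a]; first exact: groupX.
  by rewrite -expgM -expnD subnK.
apply: subsetP (mem_Mho_expg _ Gv); apply: Mho_leq.
by rewrite leq_subRL // max_h.
Qed.

Lemma Mho_jump x : x \in G -> x \notin 'Mho^1(G) ->
  exists j, x ^+ (p ^ j.+1) \in 'Mho^j.+2(G) /\ x ^+ (p ^ j) \notin 'Mho^j.+1(G).
Proof.
move=> Gx Mx; have [|j Mj min_j] := ex_minnP (_ : exists l, x ^+ (p ^ l) \in 'Mho^l.+1(G)).
  by exists (logn p #|G|); rewrite -(card_pgroup pG) expg_cardG ?group1.
case: j Mj min_j => [|j] Mj min_j; first by rewrite expn0 expg1 (negPf Mx) in Mj.
by exists j; split=> //; apply/negP => /min_j; rewrite ltnn.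
Qed.

Lemma Mho_dprod_mem n A B a b : A \x B = G -> a \in A -> b \in B ->
  (a * b \in 'Mho^n(G)) = (a \in 'Mho^n(A)) && (b \in 'Mho^n(B)).
Proof.
move=> dG Aa Bb; have [_ defG _ _] := dprodP dG.
have sAG : A \subset G by rewrite -defG mulG_subl.
have sBG : B \subset G by rewrite -defG mulG_subr.
rewrite (MhoEabelian n pG cGG) (MhoEabelian n (pgroupS sAG pG) (abelianS sAG cGG)).
rewrite (MhoEabelian n (pgroupS sBG pG) (abelianS sBG cGG)).
exact: powers_dprod.
Qed.

Lemma cycle_TI_Mho u j : u \in G -> u ^+ (p ^ j.+1) = 1 ->
  u ^+ (p ^ j) \notin 'Mho^j.+1(G) -> <[u]> :&: 'Mho^j.+1(G) = 1.
Proof.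
move=> Gu uj1 Mu; apply/trivgP/subsetP=> v /setIP[uv Mv]; apply/set1P.
apply: contraNeq (Mu) => nt_v.
have ou : #[u] = (p ^ j.+1)%N.
  by apply: order_pfactor_exact p_pr uj1 _; apply: contraNneq Mu => ->; apply: group1.
have p_v : p %| #[v].
  have pv : p.-elt v := mem_p_elt pG (subsetP (Mho_sub _ _) v Mv).
  by have [] := pgroup_pdiv pv (_ : <[v]> != 1); rewrite ?cycle_eq1.
have sv : <[u ^+ (p ^ j)]> \subset <[v]>.
  rewrite -(cardSg_cyclic (cycle_cyclic u)) ?cycle_subG ?mem_cycle //.
  by rewrite -!orderE orderXdiv ?ou ?dvdn_exp2l // expnS mulnK ?expn_gt0 ?prime_gt0.
by apply: (subsetP (subset_trans sv _) _ (cycle_id _)); rewrite cycle_subG.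
Qed.

Lemma cycle_dprod_Mho u j : u \in G -> u ^+ (p ^ j.+1) = 1 ->
  u ^+ (p ^ j) \notin 'Mho^j.+1(G) -> exists C : {group gT}, <[u]> \x C = G.
Proof.
move=> Gu uj1 Mu; have nsMG := Mho_normal j.+1 G; have [_ nMG] := andP nsMG.
have Nu := subsetP nMG u Gu.
have oub : #[coset 'Mho^j.+1(G) u] = (p ^ j.+1)%N.
  apply: order_pfactor_exact p_pr _ _; first by rewrite -morphX // uj1 morph1.
  by apply: contra Mu; rewrite -morphX // => /eqP/coset_idr->; rewrite ?groupX.
have expGb : exponent (G / 'Mho^j.+1(G)) = #[coset 'Mho^j.+1(G) u].
  apply/eqP; rewrite eqn_dvd dvdn_exponent ?mem_quotient // andbT oub.
  apply/exponentP=> _ /morphimP[g Ng Gg ->].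
  by rewrite -morphX //= coset_id // mem_Mho_expg.
have : [splits G, over <[u]>].
  apply: (@splits_quotient_TI _ G <[u]>%G _ nsMG); rewrite ?cycle_subG ?cycle_TI_Mho //.
  rewrite quotient_cycle //.
  exact: abelian_splits (mem_quotient _ Gu) (esym expGb) (quotient_abelian _ cGG).
case/splitsP=> C /complP[tiuC defG]; exists C; rewrite dprodE //.
by apply: sub_abelian_cent2 cGG _ _; rewrite ?cycle_subG // -defG mulG_subr.
Qed.

Lemma Mho1_root x : x \in 'Mho^1(G) ->
  exists z, [/\ z \in G, z ^+ p = x & forall l i, (z ^+ (p ^ l) \in 'Mho^i(G)) =
     if l is l'.+1 then x ^+ (p ^ l') \in 'Mho^i(G) else x \in 'Mho^i.+1(G)].
Proof.
case/Mho_root_max=> z []; rewrite expn1 => Gz zp Mz.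
exists z; split=> // -[|l] i; last by rewrite expnS expgM zp.
rewrite expn0 expg1; apply/idP/idP=> [/(Mho_expgn 1) | /Mz//].
by rewrite expn1 zp addn1.
Qed.

Lemma Mho_mem_dprodr A C c n : A \x C = G -> c \in C ->
  (c \in 'Mho^n(G)) = (c \in 'Mho^n(C)).
Proof. by move=> dG Cc; rewrite -{1}[c]mul1g (Mho_dprod_mem n dG) ?group1. Qed.

End AbelianPGroup.

Section MhoSplit.

Variables (gT : finGroupType) (p : nat) (G : {group gT}).
Hypotheses (p_pr : prime p) (pG : p.-group G) (cGG : abelian G).
Implicit Types (A C : {group gT}).

Lemma Mho_profile_dprodr A C x1 c n :
    A \x C = G -> x1 \in A -> x1 ^+ (p ^ n) = 1 -> c \in C ->
    (forall t, (x1 * c) ^+ (p ^ n) \in 'Mho^(n + t)(G) -> c \in 'Mho^t(C)) ->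
  forall l i, (c ^+ (p ^ l) \in 'Mho^i(C)) =
    if l < n then (x1 * c) ^+ (p ^ n) \in 'Mho^(i + (n - l))(G)
    else (x1 * c) ^+ (p ^ l) \in 'Mho^i(G).
Proof.
move=> dG Ax1 x1n Cc Mc l i; have [_ defG _ _] := dprodP dG.
have sAG : A \subset G by rewrite -defG mulG_subl.
have sCG : C \subset G by rewrite -defG mulG_subr.
have [pC cCC] := (pgroupS sCG pG, abelianS sCG cGG).
have xc_pow k : n <= k -> (x1 * c) ^+ (p ^ k) = c ^+ (p ^ k).
  move=> le_nk; rewrite expgMn; last first.
    by apply: (centsP cGG); [apply: (subsetP sAG) | apply: (subsetP sCG)].
  by rewrite -(subnK le_nk) expnD mulnC expgM x1n expg1n mul1g.
case: ltnP => [lt_ln | le_nl]; last first.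
  by rewrite xc_pow // (Mho_mem_dprodr pG cGG _ dG (groupX _ Cc)).
rewrite (xc_pow n) // (Mho_mem_dprodr pG cGG _ dG (groupX _ Cc)).
apply/idP/idP=> [/(Mho_expgn pC cCC (n - l)) | Mc_n].
  by rewrite -expgM -expnD subnKC // ltnW.
have [le_il | lt_li] := leqP i l.
  exact: subsetP (Mho_leq C le_il) _ (mem_Mho_expg pC _ Cc).
rewrite -(subnK (ltnW lt_li)); apply: Mho_expgn => //; apply: Mc.
rewrite (xc_pow n) // (Mho_mem_dprodr pG cGG _ dG (groupX _ Cc)).
by have -> : n + (i - l) = i + (n - l) by lia.
Qed.

Lemma Mho_split_cycle x j : x \in G ->
    x ^+ (p ^ j.+1) \in 'Mho^j.+2(G) -> x ^+ (p ^ j) \notin 'Mho^j.+1(G) ->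
  exists x1 c (C : {group gT}),
    [/\ <[x1]> \x C = G, x = x1 * c, c \in C, #[x1] = (p ^ j.+1)%N &
      forall l i, (c ^+ (p ^ l) \in 'Mho^i(C)) =
        if l < j.+1 then x ^+ (p ^ j.+1) \in 'Mho^(i + (j.+1 - l))(G)
        else x ^+ (p ^ l) \in 'Mho^i(G)].
Proof.
move=> Gx Mxj1 Mxj; have comm g h : g \in G -> h \in G -> commute g h.
  by move=> Gg Gh; apply: (centsP cGG).
(* With c0 a root of x ^+ (p ^ j.+1) of maximal height, <[x * c0^-1]> splits off. *)
have [c0 [Gc0 c0j1 Mc0]] :=
  Mho_root_max pG cGG (subsetP (Mho_leq G (leqnSn _)) _ Mxj1).
pose u := x * c0^-1; have Gu : u \in G by rewrite groupM ?groupV.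
have xu : x = u * c0 by rewrite mulgKV.
have uj1 : u ^+ (p ^ j.+1) = 1.
  by rewrite expgMn ?expgVn ?c0j1 ?mulgV //; apply: comm; rewrite ?groupV.
have Mu : u ^+ (p ^ j) \notin 'Mho^j.+1(G).
  apply: contra Mxj => Mu; rewrite xu expgMn; last exact: comm.
  by rewrite groupM // -add1n Mho_expgn // Mc0 // addn1.
have ou : #[u] = (p ^ j.+1)%N.
  by apply: order_pfactor_exact p_pr uj1 _; apply: contraNneq Mu => ->; apply: group1.
have [C dG] := cycle_dprod_Mho p_pr pG cGG Gu uj1 Mu.
have [a [c [ua Cc c0ac _]]] := mem_dprod dG Gc0.
have Mac t : x ^+ (p ^ j.+1) \in 'Mho^(j.+1 + t)(G) ->
    (a \in 'Mho^t(<[u]>)) && (c \in 'Mho^t(C)).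
  by move/Mc0; rewrite c0ac (Mho_dprod_mem pG cGG _ dG).
have gen_ua : <[u * a]> = <[u]>.
  apply: cycle_mul_Mho1 p_pr (mem_p_elt pG Gu) _.
  by have := Mac 1%N; rewrite addn1 => /(_ Mxj1)/andP[].
have ox1 : #[u * a] = (p ^ j.+1)%N by rewrite orderE gen_ua -orderE.
have xe : x = (u * a) * c by rewrite xu c0ac mulgA.
exists (u * a), c, C; split; rewrite ?gen_ua //.
have x1j : (u * a) ^+ (p ^ j.+1) = 1 by apply/eqP; rewrite -order_dvdn ox1.
have := Mho_profile_dprodr dG _ x1j Cc.
rewrite -xe; apply.
- by rewrite groupM ?cycle_id.
by move=> t /Mac/andP[].
Qed.

End MhoSplit.

Section AbelianTypeCancel.

Variables (gT : finGroupType) (p : nat).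
Implicit Types (C G : {group gT}) (x : gT).

Lemma perm_abelian_type_cycle_dprod x C G :
    p.-group G -> abelian G -> x != 1 -> <[x]> \x C = G ->
  perm_eq (abelian_type G) (#[x] :: abelian_type C).
Proof.
move=> pG cGG nt_x dG; have [_ defG _ _] := dprodP dG.
have cCC : abelian C by rewrite (abelianS _ cGG) // -defG mulG_subr.
have [b defC ob] := abelian_structure cCC; rewrite -ob.
apply: (@abelian_type_pgroup _ p (x :: b)); rewrite ?big_cons ?defC //.
rewrite inE negb_or eq_sym nt_x; apply: contraL (abelian_type_gt1 C) => b1.
by rewrite -ob all_map; apply/allPn; exists 1; rewrite //= order1.
Qed.

Lemma pgroup_cycle_dprod_cancel x x' C C' G G' :
    p.-group G -> abelian G -> <[x]> \x C = G -> <[x']> \x C' = G' ->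
  #[x] = #[x'] -> G \isog G' -> C \isog C'.
Proof.
move=> pG cGG dG dG' oxx' isoG.
have [x1 | nt_x] := eqVneq x 1.
  have /eqP x'1 : x' == 1 by rewrite -order_eq1 -oxx' x1 order1.
  by move: dG dG'; rewrite x1 x'1 cycle1 !dprod1g => -> ->.
have nt_x' : x' != 1 by rewrite -order_eq1 -oxx' order_eq1.
have pG' : p.-group G' by rewrite -(isog_pgroup p isoG).
have cG'G' : abelian G' by rewrite -(isog_abelian isoG).
have sCG : C \subset G by case/dprodP: dG => _ <- _ _; apply: mulG_subr.
have sC'G' : C' \subset G' by case/dprodP: dG' => _ <- _ _; apply: mulG_subr.
rewrite eq_abelian_type_isog ?(abelianS sCG cGG) ?(abelianS sC'G' cG'G') //.
have geq_trans : transitive geq by move=> m n k /= le_mn le_nk; apply: leq_trans le_mn.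
have geq_anti : antisymmetric geq by move=> m n; rewrite andbC => /anti_leq.
apply/eqP/(sorted_eq geq_trans geq_anti); rewrite ?abelian_type_sorted //.
have permG := perm_abelian_type_cycle_dprod pG cGG nt_x dG.
have permG' := perm_abelian_type_cycle_dprod pG' cG'G' nt_x' dG'.
rewrite -(perm_cons #[x]) {2}oxx'; apply: perm_trans permG'.
by rewrite -(isog_abelian_type isoG) perm_sym.
Qed.

End AbelianTypeCancel.

Lemma pgroup_isom_Mho_profile (gT : finGroupType) p (G G' : {group gT}) x y :
    prime p -> p.-group G -> abelian G -> G \isog G' -> x \in G -> y \in G' ->
    (forall l i, (x ^+ (p ^ l) \in 'Mho^i(G)) = (y ^+ (p ^ l) \in 'Mho^i(G'))) ->
  exists2 f : {morphism G >-> gT}, isom G G' f & f x = y.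
Proof.
(* The measure drops both when x is replaced by a p-th root and when G is replaced by the
   complement of a nontrivial cyclic factor. *)
move=> p_pr; have [n] := ubnP (2 * #|G| - #[x])%N.
elim: n G G' x y => // n IH G G' x y lt_n pG cGG isoG Gx Gy eq_prof.
have pG' : p.-group G' by rewrite -(isog_pgroup p isoG).
have cG'G' : abelian G' by rewrite -(isog_abelian isoG).
have eq_Mho i : (x \in 'Mho^i(G)) = (y \in 'Mho^i(G')).
  by have := eq_prof 0%N i; rewrite expn0 !expg1.
have le_xG : #[x] <= #|G| by rewrite dvdn_leq ?order_dvdG.
have [x1 | nt_x] := eqVneq x 1.
  have y1 : y = 1.
    by apply: (Mho_logn_eq1 pG' cG'G' (leqnn _)); rewrite -(card_isog isoG) -eq_Mho x1.
  by case/isogP: isoG => f injf imf; exists f; rewrite ?x1 ?y1 ?morph1 //; apply/isomP.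
have [Mx | Mx] := boolP (x \in 'Mho^1(G)).
  have [z [Gz zx eq_z]] := Mho1_root pG cGG Mx.
  have My : y \in 'Mho^1(G') by rewrite -eq_Mho.
  have [z' [Gz' zy eq_z']] := Mho1_root pG' cG'G' My.
  have lt_xz : #[x] < #[z].
    rewrite -zx order_expg_prime_lt ?(mem_p_elt pG) //.
    by apply: contraNneq nt_x => z1; rewrite -zx z1 expg1n.
  have le_zG : #[z] <= #|G| by rewrite dvdn_leq ?order_dvdG.
  have lt_zn : (2 * #|G| - #[z] < n)%N by clear -lt_n lt_xz le_zG; lia.
  have [|f isof fz] := IH G G' z z' lt_zn pG cGG isoG Gz Gz'.
    by move=> [|l] i; rewrite eq_z eq_z'.
  by exists f; rewrite // -zx morphX // fz zy.
have [j [Mxj1 Mxj]] := Mho_jump pG Gx Mx.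
have [x1 [c [C [dG xe Cc ox1 eq_c]]]] := Mho_split_cycle p_pr pG cGG Gx Mxj1 Mxj.
have Myj1 : y ^+ (p ^ j.+1) \in 'Mho^j.+2(G') by rewrite -eq_prof.
have Myj : y ^+ (p ^ j) \notin 'Mho^j.+1(G') by rewrite -eq_prof.
have [y1 [c' [C' [dG' ye Cc' oy1 eq_c']]]] := Mho_split_cycle p_pr pG' cG'G' Gy Myj1 Myj.
have oxy1 : #[x1] = #[y1] by rewrite ox1 oy1.
have isoC := pgroup_cycle_dprod_cancel pG cGG dG dG' oxy1 isoG.
have sCG : C \subset G by case/dprodP: dG => _ <- _ _; apply: mulG_subr.
have le_CG : (2 * #|C| <= #|G|)%N.
  rewrite -(dprod_card dG) -orderE ox1 leq_mul2r; apply/orP; right.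
  by rewrite -(expn0 p) ltn_exp2l ?prime_gt1.
have lt_cn : (2 * #|C| - #[c] < n)%N.
  by move: (order_gt0 c) (cardG_gt0 G); clear -lt_n le_xG le_CG; lia.
have [|g isog gc] := IH C C' c c' lt_cn (pgroupS sCG pG) (abelianS sCG cGG) isoC Cc Cc'.
  by move=> l i; rewrite eq_c eq_c'; case: ifP.
have [f isof fxc] := cycle_dprod_isom dG dG' oxy1 isog Cc.
by exists f; rewrite // xe fxc gc ye.
Qed.

Lemma abelian_isom_powers (gT : finGroupType) (G : {group gT}) x y :
    abelian G -> x \in G -> y \in G ->
    (forall k m, (x ^+ k \in powers m G) = (y ^+ k \in powers m G)) ->
  exists2 f : {morphism G >-> gT}, isom G G f & f x = y.
Proof.
have [n] := ubnP #|G|; elim: n G x y => // n IH G x y /ltnSE-leGn cGG Gx Gy eq_prof.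
have [G1 | ntG] := eqVneq G 1%G.
  move: Gx Gy; rewrite G1 => /set1P-> /set1P->.
  by exists (idm_morphism 1%G); rewrite ?morph1 //; apply/isomP; rewrite injm_idm im_idm.
pose p := pdiv #|G|; have p_pr : prime p by rewrite pdiv_prime ?cardG_gt1.
have nilG := abelian_nil cGG.
have dG : 'O_p(G) \x 'O_p^'(G) = G := nilpotent_pcoreC p nilG.
have dG' : 'O_p^'(G) \x 'O_p(G) = G by rewrite dprodC.
set P := 'O_p(G) in dG dG' *; set K := 'O_p^'(G) in dG dG' *.
have pP : p.-group P := pcore_pgroup p G.
have [sPG sKG] : P \subset G /\ K \subset G by rewrite !pcore_sub.
have [cPP cKK] := (abelianS sPG cGG, abelianS sKG cGG).
have coPK : coprime #|P| #|K| := pnat_coprime pP (pcore_pgroup _ _).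
have memP z : z \in G -> z.`_p \in P.
  by move=> Gz; rewrite (mem_Hall_pcore (nilpotent_pcore_Hall p nilG)) ?p_elt_constt ?groupX.
have memK z : z \in G -> z.`_p^' \in K.
  by move=> Gz; rewrite (mem_Hall_pcore (nilpotent_pcore_Hall _ nilG)) ?p_elt_constt ?groupX.
have defK z : z.`_p^' * z.`_p = z by have := consttC p^' z; rewrite consttNK.
have [fP isofP fPx] : exists2 fP : {morphism P >-> gT}, isom P P fP & fP x.`_p = y.`_p.
  apply: (pgroup_isom_Mho_profile p_pr pP cPP (isog_refl P)); rewrite ?memP //.
  move=> l i; rewrite !(MhoEabelian i pP cPP).
  rewrite -(powers_dprod_coprime _ _ dG cGG coPK (memP x Gx) (memK x Gx)).
  by rewrite -(powers_dprod_coprime _ _ dG cGG coPK (memP y Gy) (memK y Gy)) !consttC.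
have [fK isofK fKx] : exists2 fK : {morphism K >-> gT}, isom K K fK & fK x.`_p^' = y.`_p^'.
  apply: IH (memK x Gx) (memK y Gy) _ => //.
    apply: leq_trans leGn; rewrite -(dprod_card dG) ltn_Pmull ?cardG_gt0 //.
    by rewrite (card_Hall (nilpotent_pcore_Hall p nilG)) p_part_gt1 pi_pdiv cardG_gt1.
  move=> k m; rewrite coprime_sym in coPK.
  rewrite -(powers_dprod_coprime _ _ dG' cGG coPK (memK x Gx) (memP x Gx)).
  by rewrite -(powers_dprod_coprime _ _ dG' cGG coPK (memK y Gy) (memP y Gy)) !defK.
have [f isof fM] := dprod_isom dG dG isofP isofK.
by exists f; rewrite // -(consttC p x) fM ?memP ?memK // fPx fKx consttC.
Qed.

Theorem theorem2p1 (gT : finGroupType) (G : {group gT}) (x y : gT) :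
  abelian G -> x \in G -> y \in G ->
  (exists2 a : {perm gT}, a \in Aut G & a x = y) <->
  (G / <[x]>) \isog (G / <[y]>).
Proof.
move=> cGG Gx Gy; split=> [[a AutGa <-] | isoxy].
  exact: isog_quotient_cycle_Aut.
have eq_powers := isog_quotient_cycle_powers cGG Gx Gy isoxy.
have [f /isomP[injf imf] fx] := abelian_isom_powers cGG Gx Gy eq_powers.
by exists (aut injf imf); rewrite ?Aut_aut ?autE.
Qed.
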